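(* Let $\lambda_0,\lambda_1,\lambda_2$ be positive integers with height $h=\lambda_0+\lambda_1+\lambda_2$. For each labelling $\{i,j,k\}=\{0,1,2\}$ consider the transformed triple $\left(\lambda_j,\lambda_k,\frac{(\lambda_j+\lambda_k)^2}{\lambda_i}\right)$, with height $h_i=\lambda_j+\lambda_k+\frac{(\lambda_j+\lambda_k)^2}{\lambda_i}$. Then there is at most one index $i\in\{0,1,2\}$ with $h_i\le h$. Moreover, if $h_i=h$ then the transformed triple is a permutation of $(\lambda_0,\lambda_1,\lambda_2)$. *)

From HB Require Import structures.
From mathcomp Require Import all_boot all_order all_algebra.
Set Implicit Arguments. Unset Strict Implicit. Unset Printing Implicit Defensive.
Import Order.TTheory GRing.Theory Num.Theory.
Local Open Scope ring_scope.

Definition height (l : 'I_3 -> rat) : rat := l 0 + l 1 + l 2.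

(* The two indices other than i, as (j, k) with {i,j,k} = {0,1,2}. *)
Definition other1 (i : 'I_3) : 'I_3 := if i == 0 then 1 else 0.
Definition other2 (i : 'I_3) : 'I_3 := if i == 2 then 1 else 2.

Definition transf (l : 'I_3 -> rat) (i : 'I_3) : seq rat :=
  [:: l (other1 i); l (other2 i); (l (other1 i) + l (other2 i)) ^+ 2 / l i].

Definition transf_height (l : 'I_3 -> rat) (i : 'I_3) : rat :=
  l (other1 i) + l (other2 i) + (l (other1 i) + l (other2 i)) ^+ 2 / l i.

From HB Require Import structures.
From mathcomp Require Import all_boot all_order all_algebra.
From mathcomp Require Import lra.
Import Order.TTheory GRing.Theory Num.Theory.
Local Open Scope ring_scope.

(* Fix i and write {i,j,k} = {0,1,2} and s = l_j + l_k.  Then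
   h = l_i + s and h_i = s + s^2 / l_i, so for l_i > 0 and s >= 0
     h_i <= h  <->  s^2 / l_i <= l_i  <->  s <= l_i,
   and likewise h_i = h <-> s = l_i.  Hence h_i <= h says that l_i dominates
   the sum of the two other entries.  Two different indices cannot both
   dominate a triple of positive numbers (adding the two inequalities leaves
   twice the third entry <= 0).  In the equality case the last entry
   s^2 / l_i of the transformed triple equals l_i, so the transformed triple
   is (l_j, l_k, l_i), a permutation of the original one. *)

Section HeightComparison.
Variable R : realFieldType.

Lemma add_sqr_div_le (x s : R) : 0 < x -> 0 <= s ->
  (s + s ^+ 2 / x <= x + s) = (s <= x).
Proof.
move=> x_gt0 s_ge0.
rewrite [x + s]addrC lerD2l ler_pdivrMr // -expr2.
by rewrite ler_sqr ?nnegrE ?(ltW x_gt0).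
Qed.

Lemma add_sqr_div_eq (x s : R) : 0 < x -> 0 <= s ->
  (s + s ^+ 2 / x == x + s) = (s == x).
Proof.
move=> x_gt0 s_ge0.
rewrite [x + s]addrC (inj_eq (addrI s)) -(inj_eq (mulIf (lt0r_neq0 x_gt0))).
rewrite divfK ?lt0r_neq0 // -expr2 eqf_sqr.
have oppx_lt_s : - x < s by rewrite (lt_le_trans _ s_ge0) // oppr_lt0.
by rewrite (gt_eqF oppx_lt_s) orbF.
Qed.

End HeightComparison.

Lemma ord3_cases (i : 'I_3) : [\/ i = 0, i = 1 | i = 2].
Proof.
case: i => [[|[|[|//]]] ?]; [constructor 1 | constructor 2 | constructor 3].
all: exact: val_inj.
Qed.

Definition dominant (l : 'I_3 -> rat) (i : 'I_3) : Prop :=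
  l (other1 i) + l (other2 i) <= l i.

Lemma height_around (l : 'I_3 -> rat) (i : 'I_3) :
  height l = l i + (l (other1 i) + l (other2 i)).
Proof.
by rewrite /height /other1 /other2; case: (ord3_cases i) => -> /=; lra.
Qed.

Lemma perm_around (l : 'I_3 -> rat) (i : 'I_3) :
  perm_eq [:: l (other1 i); l (other2 i); l i] [:: l 0; l 1; l 2].
Proof.
rewrite /other1 /other2; case: (ord3_cases i) => -> /=.
- by rewrite -[[:: _; _; _]]/(rot 1 [:: l 0; l 1; l 2]) perm_rot.
- by rewrite perm_cons -[[:: _; _]]/(rot 1 [:: l 1; l 2]) perm_rot.
- exact: perm_refl.
Qed.

Lemma dominant_unique (l : 'I_3 -> rat) (i j : 'I_3) :
  (forall k, 0 < l k) -> dominant l i -> dominant l j -> i = j.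
Proof.
move=> l_gt0; have := l_gt0 0; have := l_gt0 1; have := l_gt0 2.
rewrite /dominant /other1 /other2.
by case: (ord3_cases i) (ord3_cases j) => -> [] -> //= *; exfalso; lra.
Qed.

Lemma transf_height_le (l : 'I_3 -> rat) (i : 'I_3) : (forall k, 0 < l k) ->
  (transf_height l i <= height l) <-> dominant l i.
Proof.
move=> l_gt0; rewrite /transf_height (height_around l i) add_sqr_div_le //.
by rewrite addr_ge0 // ltW.
Qed.

Lemma transf_height_eq (l : 'I_3 -> rat) (i : 'I_3) : (forall k, 0 < l k) ->
  transf_height l i = height l ->
  transf l i = [:: l (other1 i); l (other2 i); l i].
Proof.
move=> l_gt0 /eqP; rewrite /transf_height (height_around l i) add_sqr_div_eq //.
  by move=> /eqP sum_eq; rewrite /transf sum_eq expr2 mulfK ?lt0r_neq0.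
by rewrite addr_ge0 // ltW.
Qed.

Theorem lemma3p14 (l0 l1 l2 : nat) (h0 : (0 < l0)%N) (h1 : (0 < l1)%N)
  (h2 : (0 < l2)%N) :
  let l : 'I_3 -> rat := fun i => [:: l0%:R; l1%:R; l2%:R]`_i in
  (forall i j : 'I_3, transf_height l i <= height l ->
      transf_height l j <= height l -> i = j) /\
  (forall i : 'I_3, transf_height l i = height l ->
      perm_eq (transf l i) [:: l 0; l 1; l 2]).
Proof.
move=> l.
have l_gt0 : forall k, 0 < l k.
  by move=> k; case: (ord3_cases k) => ->; rewrite /l /= ltr0n.
split=> [i j hi hj | i hi].
  by apply: (dominant_unique _ _ _ l_gt0); apply/transf_height_le.
by rewrite transf_height_eq //; apply: perm_around.
Qed.
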